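(* In the homogeneous case $\rho(du|s)=\rho(du)$ with $\Lambda_0(t)=t$, suppose that given $(\mathbf m,\mathbf p)$ the ordered distinct times $T_{(1:n)}>\dots>T_{(n(\mathbf p):n)}$ have joint density (with respect to Lebesgue measure on $\{t_1>\dots>t_{n(\mathbf p)}>0\}$) $$\Big[\prod_{j=1}^{n(\mathbf p)}\phi(r_j)\Big]\prod_{j=1}^{n(\mathbf p)}e^{-\psi_{m_j,r_{j-1}}t_j}.$$ Then, conditionally on $T_{(j+1:n)},\dots,T_{(n(\mathbf p):n)}$, the distribution of $T_{(j:n)}$ depends only on $T_{(j+1:n)}=t_{j+1}$ and is the truncated exponential distribution $$\mathbb P(T_{(j:n)}\in dt_j\mid T_{(j+1:n)}=t_{j+1})=\phi(r_j)e^{-\phi(r_j)(t_j-t_{j+1})}dt_j,\qquad t_j>t_{j+1}.$$ In particular the smallest value $T_{(n(\mathbf p):n)}$ has density $\phi(n)e^{-\phi(n)y}$, $y>0$.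
   Context: $\rho(du)$ is a Lévy measure on $[0,1]$ with $\int_0^1u\rho(du)=1$. $\mathbf p$ is a partition of $\{1,\dots,n\}$ into $n(\mathbf p)$ blocks, $\mathbf m=(E_{(1)},\dots,E_{(n(\mathbf p))})$ an ordering of its blocks, $m_j=|E_{(j)}|$, $r_0=0$, $r_j=\sum_{l\le j}m_l$ (so $r_{n(\mathbf p)}=n$). $\phi(\omega)=\int_0^1(1-(1-u)^\omega)\rho(du)$ and $\psi_{i,k}=\int_0^1(1-(1-u)^i)(1-u)^k\rho(du)$. (This density is the homogeneous conditional law of the ordered distinct death times given $(\mathbf m,\mathbf p)$ for a sample from a spatial NTR process with hazard $\Lambda_0(t)=t$.) *)

From mathcomp Require Import all_boot all_order all_algebra.
From mathcomp Require Import all_classical all_reals all_analysis.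
Set Implicit Arguments. Unset Strict Implicit. Unset Printing Implicit Defensive.
Import Order.TTheory GRing.Theory Num.Theory.
Local Open Scope classical_set_scope.
Local Open Scope ring_scope.

Section NTR.
Context {R : realType}.
Variable rho : {measure set R -> \bar R}.

Definition phi (w : nat) : R :=
  Rintegral rho `[0%R, 1%R] (fun u => 1 - (1 - u) ^+ w).

Definition psi (i k : nat) : R :=
  Rintegral rho `[0%R, 1%R] (fun u => (1 - (1 - u) ^+ i) * (1 - u) ^+ k).

Variable n : nat.
(* E = (E_(1), ..., E_(n(p))) : an ordering of the blocks, 0-indexed *)
Variable E : seq {set 'I_n}.

Definition npb : nat := size E.
Definition msz (j : nat) : nat := #|nth (finset.set0 : {set 'I_n}) E j|.      (* m_{j+1} *)
Definition rsum (j : nat) : nat := (\sum_(l < j) msz l)%N.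

(* Times are encoded as t : nat -> R, with t i standing for t_{i+1}.
   tnext t i = t_{i+2} if i+2 <= n(p), and 0 otherwise. *)
Definition tnext (t : nat -> R) (i : nat) : R :=
  if (i.+1 < npb)%N then t i.+1 else 0.

Definition ordered_from (j : nat) (t : nat -> R) : bool :=
  [forall i : 'I_npb, (j <= i)%N ==> (tnext t i < t i)].

Definition joint_density (t : nat -> R) : R :=
  if ordered_from 0 t then
    (\prod_(j < npb) phi (rsum j.+1)) *
    \prod_(j < npb) expR (- (psi (msz j) (rsum j) * t j))
  else 0.

Definition setc (t : nat -> R) (j : nat) (x : R) : nat -> R :=
  fun i => if i == j then x else t i.

(* marg j t = marginal density of (T_(j+1:n), ..., T_(n(p):n)) at
   (t j, ..., t (n(p)-1)), obtained by integrating out the first j times. *)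
Fixpoint marg (j : nat) (t : nat -> R) : \bar R :=
  match j with
  | 0 => (joint_density t)%:E
  | j'.+1 => (\int[lebesgue_measure]_(x in [set: R]) marg j' (setc t j' x))%E
  end.

(* claimed conditional density of T_(j+1:n) given T_(j+2:n) = t_{j+2}
   (0-indexed j; t_{n(p)+1} := 0) *)
Definition cond_dens (j : nat) (t : nat -> R) : R :=
  if tnext t j < t j then
    phi (rsum j.+1) * expR (- (phi (rsum j.+1) * (t j - tnext t j)))
  else 0.

End NTR.

From mathcomp Require Import all_boot all_order all_algebra.
From mathcomp Require Import all_classical all_reals all_analysis.
From mathcomp Require Import measurable_realfun ring lra.
Import Order.TTheory GRing.Theory Num.Theory.
Import numFieldTopology.Exports.
Local Open Scope classical_set_scope.
Local Open Scope ring_scope.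

(* Write Phi_k = phi(r_k). Since 1 - (1-u)^(r+m) = (1 - (1-u)^r) + (1 - (1-u)^m) (1-u)^r,
   Phi_(k+1) = Phi_k + psi_(m_(k+1), r_k). Hence integrating out t_1, ..., t_j one at a
   time keeps the density in closed form: on t_(j+1) > ... > t_(n(p)) > 0 it is
     [prod_(k > j) Phi_k] exp(-Phi_j t_(j+1)) prod_(i > j) exp(-psi_(m_i, r_(i-1)) t_i),
   because exp(-Phi_j x) exp(-psi_(m_(j+1), r_j) x) = exp(-Phi_(j+1) x) integrates over
   x > t_(j+2) to exp(-Phi_(j+1) t_(j+2)) / Phi_(j+1). As 1 - (1-u)^r >= u, the mean
   condition on rho gives Phi_k >= 1 for k > 0, so these marginals are positive and
   finite, and the ratio of two consecutive ones is the truncated exponential density;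
   for the last time, r_(n(p)) = n. *)

Section OrderedFrom.
Context {R : realType} {n : nat} {E : seq {set 'I_n}}.

Lemma ordered_fromS j (t : nat -> R) : ordered_from E j t =
  ((j < npb E)%N ==> (tnext E t j < t j)) && ordered_from E j.+1 t.
Proof.
apply/idP/andP => [/forallP ord_t | [/implyP ord_j /forallP ord_t]].
  split; first by apply/implyP => jN; have := ord_t (Ordinal jN); rewrite leqnn.
  by apply/forallP => i; apply/implyP => ji; have := ord_t i; rewrite (ltnW ji).
apply/forallP => i; apply/implyP; rewrite leq_eqVlt => /orP[/eqP ji | ji].
  by rewrite -ji; apply: ord_j; rewrite ji.
by have := ord_t i; rewrite ji.
Qed.

Lemma eq_ordered_from j (t t' : nat -> R) :
  (forall i, (j <= i)%N -> t i = t' i) -> ordered_from E j t = ordered_from E j t'.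
Proof.
move=> tt'; apply: eq_forallb => i; case: (boolP (j <= i)%N) => //= ji.
by rewrite /tnext (tt' i ji); case: ifP => // _; rewrite tt' // ltnW.
Qed.

Lemma ordered_from_npb (t : nat -> R) : ordered_from E (npb E) t.
Proof. by apply/forallP => i; rewrite leqNgt ltn_ord. Qed.

Lemma tnext_setc j (t : nat -> R) x : tnext E (setc t j x) j = tnext E t j.
Proof. by rewrite /tnext /setc gtn_eqF. Qed.

Lemma ordered_fromS_setc j (t : nat -> R) x :
  ordered_from E j.+1 (setc t j x) = ordered_from E j.+1 t.
Proof. by apply: eq_ordered_from => i ji; rewrite /setc gtn_eqF. Qed.

End OrderedFrom.

Section BlockSizes.
Context {n : nat} {P : {set {set 'I_n}}} {E : seq {set 'I_n}}.
Hypotheses (hP : finset.partition P [set: 'I_n]) (hE : perm_eq E (enum P)).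

Lemma rsumS k : rsum E k.+1 = (rsum E k + msz E k)%N.
Proof. by rewrite /rsum big_ord_recr. Qed.

Lemma msz_gt0 k : (k < npb E)%N -> (0 < msz E k)%N.
Proof.
move=> kN; rewrite /msz card_gt0.
have : nth finset.set0 E k \in P by rewrite -mem_enum -(perm_mem hE) mem_nth.
by apply: contraL => /eqP ->; case/and3P: hP.
Qed.

Lemma rsum_gt0 k : (0 < k)%N -> (k <= npb E)%N -> (0 < rsum E k)%N.
Proof. by case: k => // k _ kN; rewrite rsumS addn_gt0 msz_gt0 ?orbT. Qed.

Lemma rsum_npb : rsum E (npb E) = n.
Proof.
rewrite /rsum /msz -(big_mkord xpredT (fun l => #|nth finset.set0 E l|)).
rewrite -(big_nth finset.set0 xpredT (fun B => #|B|)) (perm_big _ hE) /=.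
by rewrite big_enum /= -(card_partition hP) cardsT card_ord.
Qed.

End BlockSizes.

Section OnemExprn.
Context {R : realFieldType}.

Lemma onem_exprn_bounds (w : nat) (u : R) : 0 <= u <= 1 ->
  0 <= 1 - (1 - u) ^+ w <= w%:R * u.
Proof.
move=> /andP[u0 u1]; elim: w => [|w /andP[IH1 IH2]].
  by rewrite expr0 subrr mul0r lexx.
have : 0 <= (1 - u) ^+ w <= 1 by rewrite exprn_ge0 ?exprn_ile1 ?subr_ge0 ?lerBlDr ?lerDl.
rewrite exprS -natr1; case/andP; nra.
Qed.

Lemma ler_onem_exprn (w : nat) (u : R) : (0 < w)%N -> 0 <= u <= 1 ->
  u <= 1 - (1 - u) ^+ w.
Proof.
case: w => // w _ /andP[u0 u1].
have : (1 - u) ^+ w <= 1 by rewrite exprn_ile1 ?subr_ge0 ?lerBlDr ?lerDl.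
rewrite exprS; nra.
Qed.

End OnemExprn.

Section LevyMeasure.
Context {R : realType} {rho : {measure set R -> \bar R}}.
Hypothesis hmean : (\int[rho]_(u in `[0%R, 1%R]%classic) u%:E = 1)%E.

Let I : set R := `[0%R, 1%R].

Let mI : measurable I. Proof. exact: measurable_itv. Qed.

Let inI u : I u -> 0 <= u <= 1. Proof. by rewrite /I /= in_itv. Qed.

Lemma integrable_itv01_id : rho.-integrable I (EFin \o id).
Proof.
apply/integrableP; split; first exact/measurable_EFinP.
rewrite (eq_integral (fun u => u%:E)) ?hmean ?ltry // => u.
by rewrite inE => /inI /andP[u0 _] /=; rewrite ger0_norm.
Qed.

Lemma integrable_itv01_le_id (f : R -> R) (c : R) : measurable_fun I f ->
  (forall u, I u -> 0 <= f u <= c * u) -> rho.-integrable I (EFin \o f).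
Proof.
move=> mf f_bnd.
apply: (le_integrable mI _ _ (integrableZl mI c integrable_itv01_id)).
  exact/measurable_EFinP.
move=> u Iu /=; have /andP[f0 fc] := f_bnd u Iu.
by rewrite lee_fin !ger0_norm // (le_trans f0).
Qed.

Let measurable_onem_exprn (w : nat) : measurable_fun I (fun u : R => (1 - u) ^+ w).
Proof. by apply: measurable_funX; apply: measurable_funB. Qed.

Let integrable_phi (w : nat) : rho.-integrable I (EFin \o (fun u => 1 - (1 - u) ^+ w)).
Proof.
apply: (@integrable_itv01_le_id _ w%:R); first exact: measurable_funB.
by move=> u /inI; exact: onem_exprn_bounds.
Qed.

Let integrable_psi (m r : nat) :
  rho.-integrable I (EFin \o (fun u => (1 - (1 - u) ^+ m) * (1 - u) ^+ r)).
Proof.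
apply: (@integrable_itv01_le_id _ m%:R).
  by apply: measurable_funM => //; apply: measurable_funB.
move=> u /inI /[dup] /andP[u0 u1] /(onem_exprn_bounds m) /andP[g0 gu].
have : 0 <= (1 - u) ^+ r <= 1 by rewrite exprn_ge0 ?exprn_ile1 ?subr_ge0 ?lerBlDr ?lerDl.
case/andP; nra.
Qed.

Lemma phi0 : phi rho 0 = 0.
Proof.
by rewrite /phi; under eq_Rintegral do rewrite expr0 subrr; rewrite /Rintegral integral0.
Qed.

Lemma phiD r m : phi rho (r + m) = phi rho r + psi rho m r.
Proof.
rewrite /phi /psi -RintegralD //.
by apply: eq_Rintegral => u _; rewrite exprD; ring.
Qed.

Lemma phi_ge1 r : (0 < r)%N -> 1 <= phi rho r.
Proof.
move=> r0; have -> : 1 = Rintegral rho I id by rewrite /Rintegral hmean.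
apply: le_Rintegral => //; first exact: integrable_itv01_id.
by move=> u /inI; exact: ler_onem_exprn.
Qed.

End LevyMeasure.

Section ExponentialTail.
Context {R : realType}.

Let is_derive_scaled_expR (K c x : R) : is_derive x 1
  (fun x => - (K / c) * expR (- (c * x))) (- (K / c) * (expR (- (c * x)) * - c)).
Proof.
have lin : is_derive x (1 : R) (fun x : R => - (c * x)) (- c).
  have := @is_deriveZ R R^o R^o id c x 1 1 (is_derive_id _ _).
  by rewrite /GRing.scale /= mulr1 => /is_deriveN.
exact: is_deriveZ (is_derive1_comp (is_derive_expR _) lin).
Qed.

Let continuous_scaled_expR (K c : R) : continuous (fun x : R => K * expR (- (c * x))).
Proof.
move=> x; apply: (@continuousM _ R^o (fun=> K) (fun x => expR (- (c * x)))).
  exact: cst_continuous.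
apply: continuous_comp; last exact: continuous_expR.
by apply: (@continuousN _ R^o); apply: continuousM => //; exact: cst_continuous.
Qed.

Lemma integral_expR_tail (a c K : R) : 0 < c -> 0 <= K ->
  (\int[lebesgue_measure]_(x in [set: R]) (if a < x then K * expR (- (c * x)) else 0)%:E
   = (K * expR (- (c * a)) / c)%:E)%E.
Proof.
move=> c0 K0; set f := fun x : R => K * expR (- (c * x)).
have -> : (\int[lebesgue_measure]_(x in [set: R]) (if a < x then f x else 0)%:E
    = \int[lebesgue_measure]_(x in `]a, +oo[) (f x)%:E)%E.
  rewrite [RHS]integral_mkcond; apply: eq_integral => x _; rewrite patchE.
  rewrite (_ : (x \in _) = (a < x)); first by case: ifP.
  by apply/idP/idP; rewrite in_setE /= in_itv /= andbT.
rewrite integral_itv_obnd_cbnd; last first.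
  apply/measurable_EFinP/measurable_funTS.
  exact: continuous_measurable_fun (continuous_scaled_expR _ _).
rewrite (@ge0_continuous_FTC2y R f (fun x => - (K / c) * expR (- (c * x))) a 0).
- by rewrite -EFinB sub0r mulNr opprK mulrAC.
- by move=> x _; rewrite /f mulr_ge0 // expR_ge0.
- exact/continuous_subspaceT/continuous_scaled_expR.
- rewrite -(mulr0 (- (K / c))); apply: cvgMl_tmp.
  rewrite (_ : (fun x => expR (- (c * x))) = (fun z => expR (- z)) \o ( *%R c)) //.
  apply: (@cvg_comp _ _ _ _ _ _ (pinfty_nbhs R)); last exact: cvgr_expR.
  exact: gt0_cvgMry.
- by move=> x _; exact: (@ex_derive _ _ _ _ _ _ _ (is_derive_scaled_expR K c x)).
- exact/cvg_at_right_filter/continuous_scaled_expR.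
- move=> x _; rewrite derive1E (@derive_val _ _ _ _ _ _ _ (is_derive_scaled_expR K c x)) /f.
  by field; rewrite gt_eqF.
Qed.

End ExponentialTail.

Section Marginals.
Context {R : realType} {rho : {measure set R -> \bar R}} {n : nat} {E : seq {set 'I_n}}.

Let N := npb E.
Let Phi k := phi rho (rsum E k).
Let psi_ i := psi rho (msz E i) (rsum E i).

Hypotheses (Phi_gt0 : forall k, (0 < k)%N -> (k <= N)%N -> 0 < Phi k)
  (PhiS : forall k, Phi k.+1 = Phi k + psi_ k)
  (Phi0 : Phi 0 = 0).

Definition tpad j (t : nat -> R) : R := if (j < N)%N then t j else 0.

Definition marg_weight j (t : nat -> R) : R :=
  (\prod_(j <= k < N) Phi k.+1) * \prod_(j <= i < N) expR (- (psi_ i * t i)).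

(* The closed form of the header, with 0-indexed times; [tpad] reads t_(n(p)) as 0,
   following [tnext]. *)
Definition marg_closed j (t : nat -> R) : R :=
  if ordered_from E j t then marg_weight j t * expR (- (Phi j * tpad j t)) else 0.

Lemma marg_weight_gt0 j t : 0 < marg_weight j t.
Proof.
apply: mulr_gt0; last by apply: prodr_gt0 => i _; exact: expR_gt0.
rewrite big_seq_cond; apply: prodr_gt0 => k /andP[].
by rewrite mem_index_iota => /andP[_ kN] _; apply: Phi_gt0.
Qed.

Lemma marg_closed_gt0 j t : ordered_from E j t -> 0 < marg_closed j t.
Proof. by rewrite /marg_closed => ->; rewrite mulr_gt0 ?marg_weight_gt0 ?expR_gt0. Qed.

Lemma marg_closedS j t : (j < N)%N ->
  marg_closed j t = if (tnext E t j < t j) && ordered_from E j.+1 t then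
    Phi j.+1 * marg_weight j.+1 t * expR (- (Phi j.+1 * t j))
  else 0.
Proof.
move=> jN; rewrite /marg_closed ordered_fromS jN /=; case: ifP => // _.
rewrite /marg_weight /tpad jN (big_ltn jN) (big_ltn jN) PhiS.
have -> : expR (- ((Phi j + psi_ j) * t j)) =
    expR (- (Phi j * t j)) * expR (- (psi_ j * t j)) by rewrite -expRD; congr expR; ring.
ring.
Qed.

Lemma marg_closed_setc j t x : (j < N)%N ->
  marg_closed j (setc t j x) = if ordered_from E j.+1 t then
    (if tnext E t j < x then Phi j.+1 * marg_weight j.+1 t * expR (- (Phi j.+1 * x)) else 0)
  else 0.
Proof.
move=> jN; rewrite marg_closedS // tnext_setc ordered_fromS_setc /setc eqxx.
have -> : marg_weight j.+1 (fun i => if i == j then x else t i) = marg_weight j.+1 t.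
  by congr (_ * _); apply: eq_big_nat => i /andP[ji _]; rewrite gtn_eqF.
by case: ordered_from; rewrite ?andbT ?andbF.
Qed.

Lemma marg_closedE j : (j <= N)%N -> forall t, marg rho E j t = (marg_closed j t)%:E.
Proof.
elim: j => [_ t | j IH jN t] /=.
  rewrite /joint_density /marg_closed /marg_weight Phi0 mul0r oppr0 expR0 mulr1.
  by rewrite !big_mkord.
under eq_integral => x _ do rewrite IH ?(ltnW jN) // marg_closed_setc //.
case: (boolP (ordered_from E j.+1 t)) => ord_t; last first.
  by rewrite integral0 /marg_closed (negbTE ord_t).
have Phi_j_gt0 : 0 < Phi j.+1 by exact: Phi_gt0.
have K_ge0 : 0 <= Phi j.+1 * marg_weight j.+1 t
  by apply/ltW; rewrite mulr_gt0 ?marg_weight_gt0.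
rewrite integral_expR_tail // /marg_closed ord_t; congr (_%:E); field.
by rewrite gt_eqF.
Qed.

Lemma marg_closed_cond_dens j t : (j < N)%N -> ordered_from E j.+1 t ->
  marg_closed j t = cond_dens rho E j t * marg_closed j.+1 t.
Proof.
move=> jN ord_t; rewrite marg_closedS // ord_t andbT /cond_dens -/(Phi j.+1).
case: ifP => _; last by rewrite mul0r.
rewrite /marg_closed ord_t.
have -> : tpad j.+1 t = tnext E t j by [].
set a := tnext E t j; set c := Phi j.+1.
have -> : expR (- (c * t j)) = expR (- (c * (t j - a))) * expR (- (c * a)).
  by rewrite -expRD; congr expR; ring.
ring.
Qed.

Lemma marg_closed_last t : (0 < N)%N -> 0 < t N.-1 ->
  marg_closed N.-1 t = Phi N * expR (- (Phi N * t N.-1)).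
Proof.
move=> N0 t_gt0; rewrite marg_closedS ?ltn_predL // prednK //.
rewrite ordered_from_npb andbT /tnext prednK // ltnn t_gt0.
by rewrite /marg_weight !big_geq // !mulr1.
Qed.

End Marginals.

Theorem proposition5p2 (R : realType) (rho : {measure set R -> \bar R})
  (hsupp : rho (~` `[0%R, 1%R])%classic = 0%E)
  (hmean : (\int[rho]_(u in `[0%R, 1%R]%classic) u%:E = 1)%E)
  (n : nat) (P : {set {set 'I_n}}) (hP : finset.partition P [set: 'I_n])
  (E : seq {set 'I_n}) (hE : perm_eq E (enum P)) :
  (forall (j : nat) (t : nat -> R), (j < npb E)%N -> ordered_from E j.+1 t ->
     ((0 < marg rho E j.+1 t)%E /\ (marg rho E j.+1 t < +oo)%E) /\
     marg rho E j t = ((cond_dens rho E j t)%:E * marg rho E j.+1 t)%E)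
  /\
  (forall (t : nat -> R), (0 < npb E)%N -> 0 < t (npb E).-1 ->
     marg rho E (npb E).-1 t =
       (phi rho n * expR (- (phi rho n * t (npb E).-1)))%:E).
Proof.
have Phi_gt0 k : (0 < k)%N -> (k <= npb E)%N -> 0 < phi rho (rsum E k).
  move=> k0 kN; apply: (lt_le_trans ltr01).
  exact: phi_ge1 hmean _ (rsum_gt0 hP hE _ k0 kN).
have PhiS k :
    phi rho (rsum E k.+1) = phi rho (rsum E k) + psi rho (msz E k) (rsum E k).
  by rewrite rsumS phiD.
have Phi0 : phi rho (rsum E 0) = 0 by rewrite /rsum big_ord0 phi0.
have margE := marg_closedE Phi_gt0 PhiS Phi0.
split => [j t jN ord_t | t N0 t_gt0].
  rewrite !margE ?(ltnW jN) // lte_fin (marg_closed_gt0 Phi_gt0) ?ltry //.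
  by rewrite (marg_closed_cond_dens PhiS).
by rewrite margE ?leq_pred // (marg_closed_last PhiS) // (rsum_npb hP hE).
Qed.
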